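(* In the hexagonal three-direction setting with the random model described in the context, let $k\ge0$, let $R_b=\{r\in R: X_r=0\}$ be the set of rays with nonzero measurement, and let $C_b=\mathcal N(R_b)\setminus\mathcal N(R\setminus R_b)$ (equivalently, the set of cells none of whose three rays is a zero measurement). Then the expected number $N_C^0(k):=|C|-\mathbb{E}[|C_b|]$ of cells recognized as empty satisfies \[ N_C^0(k)=3N_C^1-3N_C^2+N_C^3, \] where \[ N_C^1=\sum_{r\in R_i}|r|\Big(1-\frac{|r|}{|C|}\Big)^k\quad\text{for any } i\in\{1,2,3\}, \] \[ N_C^2=\sum_{r_i\in R_i}\ \sum_{r_j\in R_j(r_i)}\Big(1-\frac{|r_i|+|r_j|-1}{|C|}\Big)^k\quad\text{for any } i\neq j\in\{1,2,3\}, \] \[ N_C^3=\sum_{c\in C}\Big(1-\frac{|r_1(c)|+|r_2(c)|+|r_3(c)|-2}{|C|}\Big)^k, \] and $R_j(r_i)$ denotes the set of rays in $R_j$ intersecting the ray $r_i$ (these quantities do not depend on the choice of $i$, resp. of $i\ne j$).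
   Context: Hexagonal setting. Let $d\ge 3$ be an odd integer. The set of cells is $C=\{(i_1,i_2)\in\mathbb{Z}^2 : |i_1|\le (d-1)/2,\ |i_2|\le (d-1)/2,\ |i_1+i_2|\le (d-1)/2\}$ (the cell centers are $i_1 d^1+i_2 d^2$ with $d^1=\tfrac12(\sqrt3,1)$, $d^2=(0,1)$, forming a hexagon), so $|C|=(3d^2+1)/4$. There are three directions of projection rays: $R_1$ consists of the $d$ rays $\{(i_1,i_2)\in C: i_1=a\}$, $R_2$ of the $d$ rays $\{(i_1,i_2)\in C: i_2=a\}$, and $R_3$ of the $d$ rays $\{(i_1,i_2)\in C: i_1+i_2=a\}$, for $a\in\{-(d-1)/2,\dots,(d-1)/2\}$; a ray is identified with the set of cells it meets, $|r|$ denotes its number of cells, and $R=R_1\cup R_2\cup R_3$, $|R|=3d$. Each cell $c$ lies on exactly one ray $r_i(c)\in R_i$ for each $i=1,2,3$. Random model: $k$ cells are drawn independently and uniformly from $C$ (with replacement; a cell may be drawn several times). For $r\in R$, $X_r\in\{0,1\}$ equals $1$ (a ''zero measurement'') iff none of the drawn cells lies on $r$. For a set $S$ of rays, $\mathcal N(S)$ is the set of cells lying on at least one ray of $S$. *)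

From HB Require Import structures.
From mathcomp Require Import all_boot all_order all_algebra.
Set Implicit Arguments. Unset Strict Implicit. Unset Printing Implicit Defensive.
Import Order.TTheory GRing.Theory Num.Theory.

Local Open Scope ring_scope.

Definition hrad (d : nat) : nat := (d.-1)./2.

(* A point (a,b) : 'I_d * 'I_d encodes the integer coordinates
   (i1,i2) = (a - h, b - h), so that |i1|,|i2| <= h automatically. *)
Definition coord1 (d : nat) (p : 'I_d * 'I_d) : int := (val p.1)%:Z - (hrad d)%:Z.
Definition coord2 (d : nat) (p : 'I_d * 'I_d) : int := (val p.2)%:Z - (hrad d)%:Z.

Definition is_cell (d : nat) (p : 'I_d * 'I_d) : bool :=
  `|coord1 p + coord2 p| <= (hrad d)%:Z.

Definition cell (d : nat) : finType := {p : 'I_d * 'I_d | is_cell p}.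

(* Rays: direction t in {0,1,2} (meaning R_1, R_2, R_3) and offset a in 'I_d
   encoding the integer a - h in {-h..h}. *)
Definition ray (d : nat) : finType := ('I_3 * 'I_d)%type.

Definition ray_dir (d : nat) (r : ray d) : 'I_3 := r.1.
Definition ray_val (d : nat) (r : ray d) : int := (val r.2)%:Z - (hrad d)%:Z.

Definition proj (d : nat) (t : 'I_3) (c : cell d) : int :=
  match val t with
  | 0%N => coord1 (val c)
  | 1%N => coord2 (val c)
  | _ => coord1 (val c) + coord2 (val c)
  end.

Definition raycells (d : nat) (r : ray d) : {set cell d} :=
  [set c : cell d | proj (ray_dir r) c == ray_val r].

Definition rsize (d : nat) (r : ray d) : nat := #|raycells r|.

(* r_i(c): the unique ray of R_i through c *)
Definition ray_of (d : nat) (t : 'I_3) (c : cell d) : ray d :=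
  let p := val c in
  (t, match val t with
      | 0%N => p.1
      | 1%N => p.2
      | _ => insubd p.1 (val p.1 + val p.2 - hrad d)%N
      end).
(* (offset index = projection + h, which lies in 'I_d for cells) *)

Definition Nset (d : nat) (S : {set ray d}) : {set cell d} :=
  [set c : cell d | [exists r in S, c \in raycells r]].

(* A draw of k cells (with replacement) *)
Definition draw (d k : nat) : finType := {ffun 'I_k -> cell d}.

Definition Xr (d k : nat) (w : draw d k) (r : ray d) : bool :=
  [forall l : 'I_k, w l \notin raycells r].

Definition Rb (d k : nat) (w : draw d k) : {set ray d} := [set r | ~~ Xr w r].

Definition Cb (d k : nat) (w : draw d k) : {set cell d} :=
  Nset (Rb w) :\: Nset (~: Rb w).

(* E[|C_b|] under the uniform distribution on draws (k i.i.d. uniform cells) *)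
Definition expect_Cb (d k : nat) : rat :=
  (\sum_(w : draw d k) (#|Cb w|)%:R) / (#|cell d|%:R ^+ k).

Definition NC0 (d k : nat) : rat := (#|cell d|)%:R - expect_Cb d k.

Definition NC1 (d k : nat) (i : 'I_3) : rat :=
  \sum_(r : ray d | ray_dir r == i)
     (rsize r)%:R * (1 - (rsize r)%:R / (#|cell d|)%:R) ^+ k.

Definition NC2 (d k : nat) (i j : 'I_3) : rat :=
  \sum_(ri : ray d | ray_dir ri == i)
    \sum_(rj : ray d | (ray_dir rj == j) && (raycells ri :&: raycells rj != set0))
      (1 - ((rsize ri)%:R + (rsize rj)%:R - 1) / (#|cell d|)%:R) ^+ k.

Definition NC3 (d k : nat) : rat :=
  \sum_(c : cell d)
    (1 - ((rsize (ray_of (inord 0) c))%:R + (rsize (ray_of (inord 1) c))%:R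
          + (rsize (ray_of (inord 2) c))%:R - 2) / (#|cell d|)%:R) ^+ k.

From HB Require Import structures.
From mathcomp Require Import all_boot all_order all_algebra zify ring lra.
Import Order.TTheory GRing.Theory Num.Theory.
Local Open Scope ring_scope.

(* By linearity of expectation, E|C_b| is the sum over cells c of the
   probability that the three rays r_1(c), r_2(c), r_3(c) all carry a drawn
   cell.  Inclusion-exclusion turns this probability into a signed sum of
   probabilities that the k draws avoid a union of some of these rays, and
   such a probability is (1 - |S|/|C|)^k.  Two rays of different directions
   through c meet only in c, so the unions have sizes |r_s|+|r_t|-1 and
   |r_1|+|r_2|+|r_3|-2.
   It remains to identify the resulting sums over cells with N^1, N^2, N^3.
   N^1 and N^2 are first rewritten as sums over cells (each ray, resp. pair of
   crossing rays, is counted once per cell of it, resp. once at its crossing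
   cell).  Then the coordinate swap and a reflection of the hexagon, which
   permute the three directions, show that these sums do not depend on the
   chosen direction(s). *)

Section Hexagon.
Variable d : nat.
Hypothesis d_odd : odd d.
Local Notation h := (hrad d).
Local Notation N := (#|cell d|).

Local Notation t0 := (inord 0 : 'I_3).
Local Notation t1 := (inord 1 : 'I_3).
Local Notation t2 := (inord 2 : 'I_3).

Lemma dir0E : t0 = @Ordinal 3 0 isT. Proof. by apply/val_inj; rewrite /= inordK. Qed.
Lemma dir1E : t1 = @Ordinal 3 1 isT. Proof. by apply/val_inj; rewrite /= inordK. Qed.
Lemma dir2E : t2 = @Ordinal 3 2 isT. Proof. by apply/val_inj; rewrite /= inordK. Qed.

Lemma dir_cases (t : 'I_3) : [\/ t = t0, t = t1 | t = t2].
Proof.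
rewrite dir0E dir1E dir2E.
by case: t => [[|[|[|m]]] ht]; [apply: Or31|apply: Or32|apply: Or33|]; try apply/val_inj.
Qed.

Lemma dir01 : t0 != t1. Proof. by rewrite dir0E dir1E. Qed.
Lemma dir02 : t0 != t2. Proof. by rewrite dir0E dir2E. Qed.
Lemma dir12 : t1 != t2. Proof. by rewrite dir1E dir2E. Qed.

Lemma proj0E (c : cell d) : proj t0 c = coord1 (val c). Proof. by rewrite dir0E. Qed.
Lemma proj1E (c : cell d) : proj t1 c = coord2 (val c). Proof. by rewrite dir1E. Qed.
Lemma proj2E (c : cell d) : proj t2 c = coord1 (val c) + coord2 (val c).
Proof. by rewrite dir2E. Qed.

Lemma d_double : d = (h.*2).+1.
Proof.
move: d_odd; rewrite /hrad; case: d => [//|n] /= hn.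
by rewrite -[in LHS](odd_double_half n) (negbTE hn).
Qed.

Lemma cell_bounds (c : cell d) :
  [/\ (h <= val (val c).1 + val (val c).2)%N, (val (val c).1 + val (val c).2 <= 3 * h)%N,
      (val (val c).1 <= h.*2)%N & (val (val c).2 <= h.*2)%N].
Proof.
case: c => [[a b]] /=; rewrite /is_cell /coord1 /coord2 /= ler_norml => /andP[H1 H2].
have ha := ltn_ord a; have hb := ltn_ord b; have hd := d_double; split; lia.
Qed.

Lemma ray_val_of t (c : cell d) : ray_val (ray_of t c) = proj t c.
Proof.
have [H1 H2 H3 H4] := cell_bounds c; have hd := d_double.
case: c H1 H2 H3 H4 => [[a b] Hc] /= H1 H2 H3 H4.
case: t => [[|[|[|m]]] ht] //; rewrite /ray_val /proj /ray_of /coord1 /coord2 /=.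
by rewrite val_insubd ifT; lia.
Qed.

Lemma in_ray_of t (c c' : cell d) :
  (c' \in raycells (ray_of t c)) = (proj t c' == proj t c).
Proof. by rewrite inE ray_val_of. Qed.

Lemma in_rayE (r : ray d) (c : cell d) :
  (c \in raycells r) = (ray_of (ray_dir r) c == r).
Proof.
case: r => [t o]; rewrite inE /= -ray_val_of /ray_val /= -pair_eqE /= eqxx /=.
by apply/eqP/eqP => [H|->] //; apply/val_inj => /=; lia.
Qed.

Lemma proj_inj s t (c c' : cell d) : s != t ->
  proj s c = proj s c' -> proj t c = proj t c' -> c = c'.
Proof.
case: c c' => [[a b] Hc] [[a' b'] Hc']; rewrite /proj /coord1 /coord2 /=.
case: s t => [[|[|[|m]]] hs] [[|[|[|n]]] ht] //= _ E1 E2;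
  apply/val_inj => /=; congr pair; apply/val_inj => /=; lia.
Qed.

Lemma rays_meet s t (c : cell d) : s != t ->
  raycells (ray_of s c) :&: raycells (ray_of t c) = [set c].
Proof.
move=> st; apply/setP => x; rewrite in_setI !in_ray_of in_set1.
apply/andP/eqP => [[/eqP a /eqP b]|->]; first exact: proj_inj st a b.
by rewrite !eqxx.
Qed.

Definition raylen t (c : cell d) : nat := rsize (ray_of t c).

Lemma raylenE t c : raylen t c = #|[set c' : cell d | proj t c' == proj t c]|.
Proof. by apply: eq_card => x; rewrite in_ray_of inE. Qed.

Lemma card_rays2 s t (c : cell d) : s != t ->
  (#|raycells (ray_of s c) :|: raycells (ray_of t c)|%:R : rat)
  = (raylen s c)%:R + (raylen t c)%:R - 1.
Proof.
move=> st; have := cardsUI (raycells (ray_of s c)) (raycells (ray_of t c)).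
rewrite rays_meet // cards1 => /(congr1 (fun n => (n%:R : rat))).
by rewrite !natrD /raylen /rsize => E; lra.
Qed.

Lemma card_rays3 (c : cell d) :
  (#|raycells (ray_of t0 c) :|: raycells (ray_of t1 c) :|: raycells (ray_of t2 c)|%:R : rat)
  = (raylen t0 c)%:R + (raylen t1 c)%:R + (raylen t2 c)%:R - 2.
Proof.
have := cardsUI (raycells (ray_of t0 c) :|: raycells (ray_of t1 c)) (raycells (ray_of t2 c)).
rewrite setIUl !rays_meet ?dir02 ?dir12 // setUid cards1.
move=> /(congr1 (fun n => (n%:R : rat))).
by rewrite !natrD card_rays2 ?dir01 // /raylen /rsize => E; lra.
Qed.

(* Each ray r of direction i contributes |r| equal terms, one per cell of r. *)
Lemma NC1_cells k i : NC1 d k i = \sum_c (1 - (raylen i c)%:R / N%:R) ^+ k.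
Proof.
rewrite /NC1 [RHS](partition_big (ray_of i) (fun r => ray_dir r == i)) //=.
apply: eq_bigr => r /eqP hr; rewrite mulr_natl -sumr_const.
apply: eq_big => c; first by rewrite in_rayE hr.
by rewrite in_rayE hr => /eqP <-.
Qed.

(* Each pair of crossing rays of directions i, j meets in exactly one cell. *)
Lemma NC2_cells k i j : i != j -> NC2 d k i j =
  \sum_c (1 - ((raylen i c)%:R + (raylen j c)%:R - 1) / N%:R) ^+ k.
Proof.
move=> hij; rewrite /NC2 [RHS](partition_big (ray_of i) (fun r => ray_dir r == i)) //=.
apply: eq_bigr => ri /eqP hri.
rewrite [RHS](partition_big (ray_of j)
   (fun rj => (ray_dir rj == j) && (raycells ri :&: raycells rj != set0))) /=; last first.
  move=> c /eqP hc; apply/andP; split=> //; apply/set0Pn; exists c.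
  by rewrite inE in_ray_of eqxx andbT in_rayE hri hc eqxx.
apply: eq_bigr => rj /andP[/eqP hrj /set0Pn [c0]].
rewrite inE in_rayE hri in_rayE hrj => /andP[/eqP h0i /eqP h0j].
rewrite (big_pred1 c0) /raylen ?h0i ?h0j // => c /=.
apply/idP/idP => [/andP[/eqP hci /eqP hcj]|/eqP ->]; last by rewrite h0i h0j !eqxx.
apply/eqP; apply: (@proj_inj i j c c0 hij).
  by apply/eqP; rewrite -in_ray_of h0i in_rayE hri hci.
by apply/eqP; rewrite -in_ray_of h0j in_rayE hrj hcj.
Qed.

Lemma raylen_sym (pi : cell d -> cell d) (piK : involutive pi) (t t' : 'I_3) :
  (forall c c', (proj t' (pi c) == proj t' (pi c')) = (proj t c == proj t c')) ->
  forall c, raylen t' (pi c) = raylen t c.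
Proof.
move=> H c; rewrite !raylenE -(card_preimset _ (inv_inj piK)).
by apply: eq_card => x; rewrite !inE H.
Qed.

(* sigma : (i1, i2) |-> (i2, i1) exchanges directions 1 and 2, fixes 3. *)
Lemma sigma_cell (c : cell d) : is_cell ((val c).2, (val c).1).
Proof. by case: c => [[a b] Hc]; rewrite /is_cell /coord1 /coord2 /= addrC. Qed.
Definition sigma (c : cell d) : cell d := exist (@is_cell d) _ (sigma_cell c).

Lemma sigmaK : involutive sigma.
Proof. by case=> [[a b] Hc]; apply/val_inj. Qed.

Lemma raylen_sigma0 c : raylen t0 (sigma c) = raylen t1 c.
Proof. by apply: (raylen_sym _ sigmaK) => x y; rewrite !proj0E !proj1E. Qed.
Lemma raylen_sigma2 c : raylen t2 (sigma c) = raylen t2 c.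
Proof.
by apply: (raylen_sym _ sigmaK) => x y; rewrite !proj2E /= addrC [coord1 (val y) + _]addrC.
Qed.

(* tau : (i1, i2) |-> (-(i1 + i2), i2) exchanges directions 1 and 3, fixes 2. *)
Lemma tau_lt (c : cell d) : (3 * h - val (val c).1 - val (val c).2 < d)%N.
Proof. have [H1 H2 H3 H4] := cell_bounds c; have hd := d_double; lia. Qed.

Lemma tau_cell (c : cell d) : is_cell (Ordinal (tau_lt c), (val c).2).
Proof.
have [H1 H2 H3 H4] := cell_bounds c; have hd := d_double.
move: (tau_lt c) H1 H2 H3 H4; case: c => [[a b] Hc] /= ht H1 H2 H3 H4.
by rewrite /is_cell /coord1 /coord2 /= ler_norml; apply/andP; split; lia.
Qed.
Definition tau (c : cell d) : cell d := exist (@is_cell d) _ (tau_cell c).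

Lemma tau_coord1 c : coord1 (val (tau c)) = - (coord1 (val c) + coord2 (val c)).
Proof.
have [H1 H2 H3 H4] := cell_bounds c.
by rewrite /coord1 /coord2 /=; move: H1 H2 H3 H4; case: c => [[a b] Hc] /=; lia.
Qed.

Lemma tau_coord2 c : coord2 (val (tau c)) = coord2 (val c).
Proof. by []. Qed.

Lemma tauK : involutive tau.
Proof.
move=> c; apply/val_inj; have [H1 H2 H3 H4] := cell_bounds c.
move: H1 H2 H3 H4; case: c => [[a b] Hc] /= H1 H2 H3 H4.
by congr pair; apply/val_inj => /=; lia.
Qed.

Lemma raylen_tau0 c : raylen t0 (tau c) = raylen t2 c.
Proof. by apply: (raylen_sym _ tauK) => x y; rewrite !proj0E !proj2E !tau_coord1 eqr_opp. Qed.
Lemma raylen_tau1 c : raylen t1 (tau c) = raylen t1 c.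
Proof. by apply: (raylen_sym _ tauK) => x y; rewrite !proj1E !tau_coord2. Qed.

Lemma sum_raylen1 (F : nat -> rat) t :
  \sum_c F (raylen t c) = \sum_c F (raylen t0 c).
Proof.
case: (dir_cases t) => ->; first by [].
  by rewrite [RHS](reindex_inj (inv_inj sigmaK)); apply: eq_bigr => c _; rewrite raylen_sigma0.
by rewrite [RHS](reindex_inj (inv_inj tauK)); apply: eq_bigr => c _; rewrite raylen_tau0.
Qed.

Lemma sum_raylen2 (G : nat -> nat -> rat) (G_sym : forall x y, G x y = G y x) s t :
  s != t -> \sum_c G (raylen s c) (raylen t c) = \sum_c G (raylen t0 c) (raylen t1 c).
Proof.
have swap a b : \sum_c G (raylen a c) (raylen b c) = \sum_c G (raylen b c) (raylen a c).
  by apply: eq_bigr => c _; rewrite G_sym.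
have E21 : \sum_c G (raylen t2 c) (raylen t1 c) = \sum_c G (raylen t0 c) (raylen t1 c).
  rewrite [RHS](reindex_inj (inv_inj tauK)).
  by apply: eq_bigr => c _; rewrite raylen_tau0 raylen_tau1.
have E20 : \sum_c G (raylen t2 c) (raylen t0 c) = \sum_c G (raylen t0 c) (raylen t1 c).
  rewrite -E21 [LHS](reindex_inj (inv_inj sigmaK)).
  by apply: eq_bigr => c _; rewrite raylen_sigma2 raylen_sigma0.
case: (dir_cases s) => ->; case: (dir_cases t) => -> //; rewrite ?eqxx // => _.
- by rewrite swap E20.
- by rewrite swap E21.
Qed.

Definition avoids k (w : draw d k) (S : {set cell d}) : bool := [forall l, w l \notin S].
Arguments avoids {k}.

Lemma Xr_avoids k (w : draw d k) r : Xr w r = avoids w (raycells r).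
Proof. by []. Qed.

Lemma avoidsU k (w : draw d k) A B : avoids w A && avoids w B = avoids w (A :|: B).
Proof.
apply/andP/forallP => [[/forallP H1 /forallP H2] l|H].
  by rewrite inE negb_or H1 H2.
by split; apply/forallP => l; move: (H l); rewrite inE negb_or => /andP[].
Qed.

Lemma count_avoids k (S : {set cell d}) :
  \sum_(w : draw d k) (avoids w S : nat)%:R = ((N - #|S|) ^ k)%N%:R :> rat.
Proof.
have -> : (N - #|S| = #|~: S|)%N by rewrite [#|~: S|]cardsCs setCK.
rewrite -[in RHS](card_ord k) -(card_ffun_on 'I_k (mem (~: S))) -sum1_card.
rewrite natr_sum [RHS]big_mkcond /=; apply: eq_bigr => w _.
suff -> : avoids w S = (w \in ffun_on (mem (~: S))) by case: (_ \in _).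
by apply/forallP/ffun_onP => H l; move: (H l); rewrite !inE.
Qed.

Lemma Nset_in (S : {set ray d}) (c : cell d) :
  (c \in Nset S) = [|| ray_of t0 c \in S, ray_of t1 c \in S | ray_of t2 c \in S].
Proof.
rewrite inE; apply/existsP/idP.
  case=> r /andP[rS]; rewrite in_rayE => /eqP cr; rewrite -cr in rS.
  by case: (dir_cases (ray_dir r)) => E; rewrite E in rS; rewrite rS ?orbT.
case/or3P => H; [exists (ray_of t0 c)|exists (ray_of t1 c)|exists (ray_of t2 c)];
  by rewrite H in_ray_of eqxx.
Qed.

Lemma in_Cb k (w : draw d k) (c : cell d) : (c \in Cb w) =
  [&& ~~ Xr w (ray_of t0 c), ~~ Xr w (ray_of t1 c) & ~~ Xr w (ray_of t2 c)].
Proof.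
rewrite /Cb inE !Nset_in !inE.
by case: (Xr w (ray_of t0 c)); case: (Xr w (ray_of t1 c)); case: (Xr w (ray_of t2 c)).
Qed.

Lemma incl_excl3 (x y z : bool) : ([&& ~~ x, ~~ y & ~~ z] : nat)%:R =
  1 - (x : nat)%:R - (y : nat)%:R - (z : nat)%:R + (x && y : nat)%:R
  + (x && z : nat)%:R + (y && z : nat)%:R - ([&& x, y & z] : nat)%:R :> rat.
Proof. by case: x; case: y; case: z => /=; lra. Qed.

Lemma prob_in_Cb k (c : cell d) :
  (\sum_(w : draw d k) (c \in Cb w : nat)%:R) / N%:R ^+ k =
    1 - (1 - (raylen t0 c)%:R / N%:R) ^+ k - (1 - (raylen t1 c)%:R / N%:R) ^+ k
      - (1 - (raylen t2 c)%:R / N%:R) ^+ k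
      + (1 - ((raylen t0 c)%:R + (raylen t1 c)%:R - 1) / N%:R) ^+ k
      + (1 - ((raylen t0 c)%:R + (raylen t2 c)%:R - 1) / N%:R) ^+ k
      + (1 - ((raylen t1 c)%:R + (raylen t2 c)%:R - 1) / N%:R) ^+ k
      - (1 - ((raylen t0 c)%:R + (raylen t1 c)%:R + (raylen t2 c)%:R - 2) / N%:R) ^+ k :> rat.
Proof.
have N_neq0 : N%:R != 0 :> rat by rewrite pnatr_eq0 -lt0n; apply/card_gt0P; exists c.
have powE (a : rat) : (N%:R - a) ^+ k = (1 - a / N%:R) ^+ k * N%:R ^+ k.
  by rewrite -exprMn mulrBl divfK // mul1r.
under eq_bigr => w _ do rewrite in_Cb incl_excl3 !Xr_avoids !andbA !avoidsU.
rewrite !(sumrB, big_split) /= sumr_const card_ffun card_ord !count_avoids.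
rewrite !natrX !natrB ?max_card // card_rays3 !card_rays2 ?dir01 ?dir02 ?dir12 //.
rewrite -!/(rsize _) -!/(raylen _ c) !powE.
by field; rewrite expf_neq0.
Qed.

Lemma expect_Cb_cells k :
  expect_Cb d k = \sum_c (\sum_(w : draw d k) (c \in Cb w : nat)%:R) / N%:R ^+ k :> rat.
Proof.
rewrite /expect_Cb -mulr_suml exchange_big /=; congr (_ / _).
apply: eq_bigr => w _; rewrite -sum1_card natr_sum big_mkcond /=.
by apply: eq_bigr => c _; case: (c \in Cb w).
Qed.

Lemma NC3_cells k : NC3 d k =
  \sum_c (1 - ((raylen t0 c)%:R + (raylen t1 c)%:R + (raylen t2 c)%:R - 2) / N%:R) ^+ k.
Proof. by []. Qed.

End Hexagon.

Theorem proposition3p2 (d k : nat) (hodd : odd d) (hd : (3 <= d)%N)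
    (i j : 'I_3) (hij : i != j) :
  NC0 d k = 3%:R * NC1 d k i - 3%:R * NC2 d k i j + NC3 d k.
Proof.
set N := #|cell d|.
pose P1 (x : nat) : rat := (1 - x%:R / N%:R) ^+ k.
pose P2 (x y : nat) : rat := (1 - (x%:R + y%:R - 1) / N%:R) ^+ k.
have P2_sym x y : P2 x y = P2 y x by rewrite /P2 (addrC x%:R).
rewrite /NC0 expect_Cb_cells.
under eq_bigr => c _ do rewrite prob_in_Cb //.
rewrite (NC1_cells d hodd) (NC2_cells d hodd _ _ _ hij) NC3_cells.
rewrite !(sumrB, big_split) /= sumr_const.
(* Reduce every sum to direction 1, resp. to the pair of directions (1, 2);
   the identity is then linear arithmetic in these sums. *)
have sum1 := sum_raylen1 d hodd P1; have sum2 := sum_raylen2 d hodd P2 P2_sym.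
rewrite /P1 /P2 /= in sum1 sum2.
rewrite (sum1 i) (sum1 (inord 1)) (sum1 (inord 2)) (sum2 _ _ hij).
by rewrite (sum2 (inord 0) (inord 2)) ?dir02 // (sum2 (inord 1) (inord 2)) ?dir12 //; lra.
Qed.
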